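(* Fix a null parameter $\theta=(\rho,\gamma,\alpha_1,\beta_1,\dots,\alpha_n,\beta_n)$ satisfying (G1) and (G2), and define the alternative $\tilde\theta=(\rho^{(1)},\gamma^{(1)},\alpha_1,\beta_1,\dots,\alpha_n,\beta_n)$ by $(\rho^{(1)},\gamma^{(1)})=(\rho+\delta_1,\gamma)$ if $\theta$ is in Case (S), and $(\rho^{(1)},\gamma^{(1)})=(\rho+2\delta_2,\gamma-\delta_2)$ if $\theta$ is in Case (L), where $\delta_1,\delta_2$ may depend on $n$. Suppose $e^\rho\|\eta\|_1^2\delta_1^2\to0$ in Case (S) and $\|\mu\|_1\|\nu\|_1\delta_2^2\to0$ in Case (L) (with $\mu,\nu,\eta$ computed under $\theta$). Let $P_0^{(n)}$ and $P_1^{(n)}$ be the distributions of $A$ under $\theta$ and $\tilde\theta$ respectively. Then $\chi^2(P_0^{(n)},P_1^{(n)})\to0$ as $n\to\infty$.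
   Context: Asymptotic framework: $n\to\infty$ and all parameters may depend on $n$. $(x,y)$ is the inner product, $\|x\|_1$ the $\ell^1$ norm, $x_{\max}$ the largest entry. $\chi^2(P,Q)=\sum_x (Q(x)-P(x))^2/P(x)$ is the chi-square divergence. The $p_1$ model: a directed network on nodes $\{1,\dots,n\}$ has adjacency matrix $A\in\{0,1\}^{n\times n}$ with $A_{ii}=0$. The pairs $(A_{ij},A_{ji})$, $1\le i<j\le n$, are independent, and for parameters $\theta=(\rho,\gamma,\alpha_1,\beta_1,\dots,\alpha_n,\beta_n)$ with $\sum_i\alpha_i=\sum_i\beta_i=0$, for $a,b\in\{0,1\}$, $i\ne j$: $\mathbb P(A_{ij}=a,A_{ji}=b)=K_{ij}\exp(a(\gamma+\alpha_i+\beta_j)+b(\gamma+\alpha_j+\beta_i)+ab\rho)$, $K_{ij}=[1+e^{\gamma+\alpha_i+\beta_j}+e^{\gamma+\alpha_j+\beta_i}+e^{2\gamma+\alpha_i+\beta_j+\alpha_j+\beta_i+\rho}]^{-1}$. Let $\mu_i=e^{\gamma/2+\alpha_i}$, $\nu_i=e^{\gamma/2+\beta_i}$, $\eta_i=\mu_i\nu_i$; $\tilde\rho=\log(\|\eta\|_1^2/[(\mu,\eta)(\nu,\eta)])$. Conditions: (G1) $\mu_{\max}\to0$, $\nu_{\max}\to0$, $e^{\rho/2}\eta_{\max}\to0$. (G2) $e^{\rho/2}\|\eta\|_1\to\infty$ and $\|\eta\|_1\to\infty$. Case (S): $e^\rho/e^{\tilde\rho}\to0$; Case (L): $e^\rho\ge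 Ce^{\tilde\rho}$ for a constant $C>0$. *)

From HB Require Import structures.
From mathcomp Require Import all_boot all_order all_algebra.
From mathcomp Require Import all_classical all_reals all_analysis.
Set Implicit Arguments. Unset Strict Implicit. Unset Printing Implicit Defensive.
Import Order.TTheory GRing.Theory Num.Theory.
Local Open Scope ring_scope.

Section P1.
Variable R : realType.

Definition K_ij n (rho gamma : R) (alpha beta : 'I_n -> R) (i j : 'I_n) : R :=
  (1 + expR (gamma + alpha i + beta j) + expR (gamma + alpha j + beta i)
     + expR (2 * gamma + alpha i + beta j + alpha j + beta i + rho))^-1.

Definition pair_prob n (rho gamma : R) (alpha beta : 'I_n -> R) (i j : 'I_n)
    (a b : bool) : R :=
  K_ij rho gamma alpha beta i j *
  expR ((a%:R) * (gamma + alpha i + beta j) + (b%:R) * (gamma + alpha j + beta i)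
        + (a%:R) * (b%:R) * rho).

Definition p1_prob n (rho gamma : R) (alpha beta : 'I_n -> R)
    (A : 'M[bool]_n) : R :=
  \prod_(i : 'I_n) \prod_(j : 'I_n | (i < j)%N)
     pair_prob rho gamma alpha beta i j (A i j) (A j i).

Definition adjacency n (A : 'M[bool]_n) : bool := [forall i, ~~ A i i].

Definition chi2 n (P Q : 'M[bool]_n -> R) : R :=
  \sum_(A : 'M[bool]_n | adjacency A) (Q A - P A) ^+ 2 / P A.

Definition muv n (gamma : R) (alpha : 'I_n -> R) (i : 'I_n) : R :=
  expR (gamma / 2 + alpha i).
Definition etav n (gamma : R) (alpha beta : 'I_n -> R) (i : 'I_n) : R :=
  muv gamma alpha i * muv gamma beta i.   (* nu = muv gamma beta *)

Definition l1 n (x : 'I_n -> R) : R := \sum_i `|x i|.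
Definition inner n (x y : 'I_n -> R) : R := \sum_i x i * y i.
Definition vmax n (x : 'I_n -> R) : R := \big[Num.max/0]_i x i.

Definition rho_tilde n (gamma : R) (alpha beta : 'I_n -> R) : R :=
  let m := muv gamma alpha in let v := muv gamma beta in
  let e := etav gamma alpha beta in
  ln (l1 e ^+ 2 / (inner m e * inner v e)).

End P1.

From HB Require Import structures.
From mathcomp Require Import all_boot all_order all_algebra.
From mathcomp Require Import all_classical all_reals all_analysis.
From mathcomp Require Import ring lra.
Set Implicit Arguments. Unset Strict Implicit. Unset Printing Implicit Defensive.
Import Order.TTheory GRing.Theory Num.Theory.
Import numFieldNormedType.Exports.
Local Open Scope classical_set_scope.
Local Open Scope ring_scope.

(* The dyads (A_ij, A_ji), i < j, are independent under both parameters, so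
   1 + chi^2 factorises into the product over i < j of the per-dyad quantities
   sum_ab q_ij(a,b)^2 / p_ij(a,b).  In both cases the alternative reweights the
   four cells of a dyad by 1 or by a common factor m = e^d (d = delta_1 in
   Case (S), acting on the reciprocated cell; d = -delta_2 in Case (L), acting
   on the two asymmetric cells).  If A >= 1 and B are the total weights of the
   untouched and reweighted cells, the per-dyad quantity is
   (A + B)(A + m^2 B) / (A + m B)^2 <= 1 + 16 d^2 B, hence
   chi^2 <= exp (16 d^2 sum_(i<j) B_ij) - 1, and sum_(i<j) B_ij is at most
   e^rho |eta|_1^2 in Case (S) and |mu|_1 |nu|_1 in Case (L). *)

Section DyadFactorization.
Variables (R : comPzSemiRingType) (n : nat).

Definition dyads_of (A : 'M[bool]_n) : {ffun 'I_n * 'I_n -> bool * bool} :=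
  [ffun p : 'I_n * 'I_n =>
     if (p.1 < p.2)%N then (A p.1 p.2, A p.2 p.1) else (false, false)].

Definition matrix_of_dyads (f : {ffun 'I_n * 'I_n -> bool * bool}) : 'M[bool]_n :=
  \matrix_(i, j) if (i < j)%N then (f (i, j)).1
                 else if (j < i)%N then (f (j, i)).2 else false.

Definition upper_supported (f : {ffun 'I_n * 'I_n -> bool * bool}) : bool :=
  [forall p : 'I_n * 'I_n, (p.1 < p.2)%N || (f p == (false, false))].

Lemma prod_upper_pairs (F : 'I_n -> 'I_n -> R) :
  \prod_(i : 'I_n) \prod_(j : 'I_n | (i < j)%N) F i j =
  \prod_(p : 'I_n * 'I_n) (if (p.1 < p.2)%N then F p.1 p.2 else 1).
Proof.
rewrite -(pair_bigA _ (fun i j : 'I_n => if (i < j)%N then F i j else 1)).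
by apply: eq_bigr => i _; rewrite big_mkcond.
Qed.

Lemma matrix_of_dyadsK (f : {ffun 'I_n * 'I_n -> bool * bool}) :
  upper_supported f -> dyads_of (matrix_of_dyads f) = f.
Proof.
move=> /forallP f_upper; apply/ffunP => p; rewrite ffunE.
case: ifP => p_lt; last by have := f_upper p; rewrite p_lt => /eqP ->.
rewrite !mxE p_lt ltnNge (ltnW p_lt) /=.
by case: p p_lt => i j /=; case: (f (i, j)).
Qed.

Lemma dyads_ofK (A : 'M[bool]_n) :
  adjacency A -> matrix_of_dyads (dyads_of A) = A.
Proof.
move=> /forallP A_irr; apply/matrixP => i j; rewrite !mxE !ffunE /=.
case: ltngtP => // /val_inj ->; exact/esym/negbTE.
Qed.

Lemma sum_adjacency_prod_dyads (g : 'I_n -> 'I_n -> bool -> bool -> R) :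
  \sum_(A : 'M[bool]_n | adjacency A)
     \prod_(i : 'I_n) \prod_(j : 'I_n | (i < j)%N) g i j (A i j) (A j i)
  = \prod_(i : 'I_n) \prod_(j : 'I_n | (i < j)%N) \sum_(a : bool) \sum_(b : bool) g i j a b.
Proof.
(* Below the diagonal the cell distribution is the point mass at (false, false). *)
pose G (p : 'I_n * 'I_n) (ab : bool * bool) : R :=
  if (p.1 < p.2)%N then g p.1 p.2 ab.1 ab.2 else (ab == (false, false))%:R.
rewrite prod_upper_pairs.
transitivity (\prod_(p : 'I_n * 'I_n) \sum_(ab : bool * bool) G p ab); last first.
  apply: eq_bigr => p _; rewrite /G; case: ifP => _.
    by rewrite (pair_bigA _ (fun a b => g p.1 p.2 a b)).
  by rewrite (bigD1 (false, false)) //= big1 ?addr0 // => ab /negbTE ->.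
rewrite (bigA_distr_bigA G) (bigID upper_supported) /= [X in _ + X]big1 ?addr0.
  rewrite (reindex_onto dyads_of matrix_of_dyads) /=; last exact: matrix_of_dyadsK.
  apply: eq_big => [A|A _].
    have -> : upper_supported (dyads_of A).
      by apply/forallP => p; rewrite ffunE; case: ifP.
    by apply/idP/eqP => [/dyads_ofK // | <-]; apply/forallP => i; rewrite !mxE ltnn.
  by rewrite prod_upper_pairs; apply: eq_bigr => -[i j] _; rewrite /G ffunE /=; case: ifP.
move=> f /forallPn [p]; rewrite negb_or => /andP [p_ge f_p].
by rewrite (bigD1 p) //= /G (negbTE p_ge) (negbTE f_p) mul0r.
Qed.

End DyadFactorization.

Section DyadChi2.
Variable R : realType.

(* [c10] is the weight of [(A_ij, A_ji) = (true, false)]. *)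
Definition cell (c00 c10 c01 c11 : R) (a b : bool) : R :=
  if a then (if b then c11 else c10) else (if b then c01 else c00).

Lemma pair_prob_cell n rho gamma (alpha beta : 'I_n -> R) i j a b :
  pair_prob rho gamma alpha beta i j a b =
  cell 1 (expR (gamma + alpha i + beta j)) (expR (gamma + alpha j + beta i))
       (expR (2 * gamma + alpha i + beta j + alpha j + beta i + rho)) a b /
  (1 + expR (gamma + alpha i + beta j) + expR (gamma + alpha j + beta i)
     + expR (2 * gamma + alpha i + beta j + alpha j + beta i + rho)).
Proof.
rewrite /pair_prob /K_ij mulrC; congr (_ * _).
by case: a; case: b; rewrite /= ?mul0r ?mul1r ?add0r ?addr0 ?expR0 //;
  congr expR; ring.
Qed.

Lemma sum_cell_normalized (c00 c10 c01 c11 : R) :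
  c00 + c10 + c01 + c11 != 0 ->
  \sum_(a : bool) \sum_(b : bool) cell c00 c10 c01 c11 a b / (c00 + c10 + c01 + c11) = 1.
Proof. by move=> c_neq0; rewrite !big_bool /=; field. Qed.

Lemma sum_cell_sqr_ratio (c00 c10 c01 c11 e00 e10 e01 e11 : R) :
  0 < c00 -> 0 < c10 -> 0 < c01 -> 0 < c11 ->
  0 < e00 -> 0 < e10 -> 0 < e01 -> 0 < e11 ->
  \sum_(a : bool) \sum_(b : bool)
     (cell e00 e10 e01 e11 a b / (e00 + e10 + e01 + e11)) ^+ 2 /
     (cell c00 c10 c01 c11 a b / (c00 + c10 + c01 + c11))
  = (c00 + c10 + c01 + c11) *
    (e00 ^+ 2 / c00 + e10 ^+ 2 / c10 + e01 ^+ 2 / c01 + e11 ^+ 2 / c11) /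
    (e00 + e10 + e01 + e11) ^+ 2.
Proof.
move=> *; have c_neq0 : c00 + c10 + c01 + c11 != 0 by apply: lt0r_neq0; lra.
have e_neq0 : e00 + e10 + e01 + e11 != 0 by apply: lt0r_neq0; lra.
by rewrite !big_bool /=; field; rewrite c_neq0 e_neq0 !lt0r_neq0.
Qed.

Lemma pair_prob_gt0 n rho gamma (alpha beta : 'I_n -> R) i j a b :
  0 < pair_prob rho gamma alpha beta i j a b.
Proof.
rewrite pair_prob_cell divr_gt0 ?addr_gt0 ?expR_gt0 //.
by case: a; case: b; rewrite /= ?expR_gt0.
Qed.

Lemma sum_pair_prob n rho gamma (alpha beta : 'I_n -> R) i j :
  \sum_(a : bool) \sum_(b : bool) pair_prob rho gamma alpha beta i j a b = 1.
Proof.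
under eq_bigr => a _ do under eq_bigr => b _ do rewrite pair_prob_cell.
by rewrite sum_cell_normalized // lt0r_neq0 ?addr_gt0 ?expR_gt0.
Qed.

Lemma p1_prob_gt0 n rho gamma (alpha beta : 'I_n -> R) A :
  0 < p1_prob rho gamma alpha beta A.
Proof. by apply: prodr_gt0 => i _; apply: prodr_gt0 => j _; apply: pair_prob_gt0. Qed.

Lemma chi2_ge0 n (P Q : 'M[bool]_n -> R) : (forall A, 0 < P A) -> 0 <= chi2 P Q.
Proof. by move=> P_gt0; apply: sumr_ge0 => A _; rewrite divr_ge0 ?sqr_ge0 ?ltW. Qed.

Lemma chi2_prod_dyads n (p q : 'I_n -> 'I_n -> bool -> bool -> R)
    (P Q : 'M[bool]_n -> R) :
  (forall A, P A = \prod_(i : 'I_n) \prod_(j : 'I_n | (i < j)%N) p i j (A i j) (A j i)) ->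
  (forall A, Q A = \prod_(i : 'I_n) \prod_(j : 'I_n | (i < j)%N) q i j (A i j) (A j i)) ->
  (forall i j a b, 0 < p i j a b) ->
  (forall i j, \sum_(a : bool) \sum_(b : bool) p i j a b = 1) ->
  (forall i j, \sum_(a : bool) \sum_(b : bool) q i j a b = 1) ->
  chi2 P Q
  = \prod_(i : 'I_n) \prod_(j : 'I_n | (i < j)%N)
      (\sum_(a : bool) \sum_(b : bool) q i j a b ^+ 2 / p i j a b) - 1.
Proof.
move=> PE QE p_gt0 p_sum1 q_sum1.
have P_gt0 A : 0 < P A by rewrite PE; apply: prodr_gt0 => i _; apply: prodr_gt0.
have mass1 (r : 'I_n -> 'I_n -> bool -> bool -> R) (S : 'M[bool]_n -> R) :
    (forall A, S A = \prod_(i : 'I_n) \prod_(j : 'I_n | (i < j)%N) r i j (A i j) (A j i)) ->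
    (forall i j, \sum_(a : bool) \sum_(b : bool) r i j a b = 1) ->
    \sum_(A : 'M[bool]_n | adjacency A) S A = 1.
  move=> SE r_sum1; under eq_bigr => A _ do rewrite SE.
  by rewrite sum_adjacency_prod_dyads big1 // => i _; rewrite big1.
transitivity (\sum_(A : 'M[bool]_n | adjacency A) Q A ^+ 2 / P A
   - 2 * \sum_(A : 'M[bool]_n | adjacency A) Q A
   + \sum_(A : 'M[bool]_n | adjacency A) P A).
  rewrite mulr_sumr -sumrN -!big_split /=; apply: eq_bigr => A _.
  by field; apply: lt0r_neq0.
rewrite (mass1 q Q) // (mass1 p P) //.
have prod_sqr_div (F G : 'I_n -> 'I_n -> R) :
    \prod_(i : 'I_n) \prod_(j : 'I_n | (i < j)%N) (F i j ^+ 2 / G i j) =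
    (\prod_(i : 'I_n) \prod_(j : 'I_n | (i < j)%N) F i j) ^+ 2 /
    \prod_(i : 'I_n) \prod_(j : 'I_n | (i < j)%N) G i j.
  rewrite -prodrXl -prodf_div; apply: eq_bigr => i _.
  by rewrite -prodrXl -prodf_div.
under eq_bigr => A _ do rewrite PE QE -prod_sqr_div.
by rewrite (@sum_adjacency_prod_dyads _ n (fun i j a b => q i j a b ^+ 2 / p i j a b)); ring.
Qed.

Lemma prod_le_expR_sum n (S c : 'I_n -> 'I_n -> R) :
  (forall i j, 0 <= S i j <= 1 + c i j) ->
  \prod_(i : 'I_n) \prod_(j : 'I_n | (i < j)%N) S i j <=
  expR (\sum_(i : 'I_n) \sum_(j : 'I_n | (i < j)%N) c i j).
Proof.
move=> S_bnd; rewrite expR_sum; apply: ler_prod => i _; apply/andP; split.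
  by apply: prodr_ge0 => j _; case/andP: (S_bnd i j).
rewrite expR_sum; apply: ler_prod => j _; case/andP: (S_bnd i j) => -> /= S_le.
exact: le_trans S_le (expR_ge1Dx _).
Qed.

Lemma chi2_p1_le_expR n rho gamma rho1 gamma1 (alpha beta : 'I_n -> R)
    (c : 'I_n -> 'I_n -> R) :
  (forall i j, \sum_(a : bool) \sum_(b : bool)
      pair_prob rho1 gamma1 alpha beta i j a b ^+ 2 /
      pair_prob rho gamma alpha beta i j a b <= 1 + c i j) ->
  chi2 (p1_prob rho gamma alpha beta) (p1_prob rho1 gamma1 alpha beta)
  <= expR (\sum_(i : 'I_n) \sum_(j : 'I_n | (i < j)%N) c i j) - 1.
Proof.
move=> dyad_le; rewrite (@chi2_prod_dyads n (pair_prob rho gamma alpha beta)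
  (pair_prob rho1 gamma1 alpha beta)) //; last 3 first.
- exact: pair_prob_gt0.
- exact: sum_pair_prob.
- exact: sum_pair_prob.
rewrite lerD2r; apply: prod_le_expR_sum => i j; rewrite dyad_le andbT.
apply: sumr_ge0 => a _; apply: sumr_ge0 => b _.
by rewrite divr_ge0 ?sqr_ge0 ?ltW ?pair_prob_gt0.
Qed.

(* [m = e^d] multiplies the weight [B] of the tilted cells; [A] is the rest. *)
Lemma tilt_ratio_le (A B d : R) : 1 <= A -> 0 < B -> d ^+ 2 <= 1 / 4 ->
  (A + B) * (A + expR d ^+ 2 * B) / (A + expR d * B) ^+ 2 <= 1 + 16 * d ^+ 2 * B.
Proof.
move=> A_ge1 B_gt0 d_small.
have [m_ge m_near1] : 1 / 2 <= expR d /\ (expR d - 1) ^+ 2 <= 4 * d ^+ 2.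
  have e_ge := expR_ge1Dx d; have eN_ge := expR_ge1Dx (- d).
  rewrite expRN in eN_ge; have e_gt0 := expR_gt0 d.
  have d_bnd : -1/2 <= d <= 1/2 by apply/andP; split; nra.
  have e_le : (1 - d) * expR d <= 1.
    by have := ler_wpM2r (ltW e_gt0) eN_ge; rewrite mulVf ?lt0r_neq0.
  by split; [nra | have [] := lerP 0 d; nra].
set m := expR d in m_ge m_near1 *.
have D_ge1 : 1 <= A + m * B by nra.
rewrite ler_pdivrMr ?exprn_gt0 ?(lt_le_trans ltr01) //.
have -> : (A + B) * (A + m ^+ 2 * B) = (A + m * B) ^+ 2 + A * B * (m - 1) ^+ 2 by ring.
(* [A <= 2 (A + m B)] since [m >= 1/2], and [(m - 1)^2 <= 4 d^2]. *)
have Am_le : A * (m - 1) ^+ 2 <= 2 * (A + m * B) * (4 * d ^+ 2).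
  apply: (le_trans (y := A * (4 * d ^+ 2))); first by apply: ler_wpM2l; lra.
  by apply: ler_wpM2r; nra.
have : A * (m - 1) ^+ 2 <= 16 * d ^+ 2 * (A + m * B) ^+ 2.
  have := sqr_ge0 d; have : 0 <= d ^+ 2 * (A + m * B) * (A + m * B - 1).
    by apply: mulr_ge0; [apply: mulr_ge0; [exact: sqr_ge0 | lra] | lra].
  nra.
nra.
Qed.

End DyadChi2.

Lemma sum_upper_sym_le (R : numDomainType) n (a : 'I_n -> 'I_n -> R) :
  (forall i j, 0 <= a i j) ->
  \sum_(i : 'I_n) \sum_(j : 'I_n | (i < j)%N) (a i j + a j i) <= \sum_i \sum_j a i j.
Proof.
move=> a_ge0.
have -> : \sum_(i : 'I_n) \sum_(j : 'I_n | (i < j)%N) (a i j + a j i) =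
    \sum_(i : 'I_n) \sum_(j : 'I_n) (if (i < j)%N then a i j else 0)
  + \sum_(i : 'I_n) \sum_(j : 'I_n) (if (i < j)%N then a j i else 0).
  by rewrite -big_split; apply: eq_bigr => i _; rewrite big_split -!big_mkcond.
rewrite [X in _ + X]exchange_big -big_split; apply: ler_sum => i _.
rewrite -big_split; apply: ler_sum => j _ /=.
by case: ltngtP => _; rewrite ?addr0 ?add0r.
Qed.

Section ParameterShifts.
Variables (R : realType) (n : nat) (alpha beta : 'I_n -> R).

Lemma l1E_ge0 (x : 'I_n -> R) : (forall i, 0 <= x i) -> l1 x = \sum_i x i.
Proof. by move=> x_ge0; apply: eq_bigr => i _; rewrite ger0_norm. Qed.

Lemma muv_ge0 gamma (x : 'I_n -> R) i : 0 <= muv gamma x i.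
Proof. exact: expR_ge0. Qed.

Lemma etav_ge0 gamma i : 0 <= etav gamma alpha beta i.
Proof. by rewrite mulr_ge0 ?muv_ge0. Qed.

Lemma l1_muv_mul gamma :
  l1 (muv gamma alpha) * l1 (muv gamma beta) =
  \sum_i \sum_j muv gamma alpha i * muv gamma beta j.
Proof.
rewrite (l1E_ge0 (muv_ge0 gamma alpha)) (l1E_ge0 (muv_ge0 gamma beta)) mulr_suml.
by apply: eq_bigr => i _; rewrite mulr_sumr.
Qed.

Lemma l1_etav_le gamma :
  l1 (etav gamma alpha beta) <= l1 (muv gamma alpha) * l1 (muv gamma beta).
Proof.
rewrite l1_muv_mul (l1E_ge0 (etav_ge0 gamma)); apply: ler_sum => i _.
by rewrite (bigD1 i) //= lerDl sumr_ge0 // => j _; rewrite mulr_ge0 ?muv_ge0.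
Qed.

Lemma dyad_chi2_rho_shift_le rho gamma delta i j : delta ^+ 2 <= 1 / 4 ->
  \sum_(a : bool) \sum_(b : bool)
     pair_prob (rho + delta) gamma alpha beta i j a b ^+ 2 /
     pair_prob rho gamma alpha beta i j a b
  <= 1 + 16 * delta ^+ 2 * (expR rho * (etav gamma alpha beta i * etav gamma alpha beta j)).
Proof.
move=> delta_small.
under eq_bigr => a _ do under eq_bigr => b _ do rewrite !pair_prob_cell.
set X := expR (gamma + alpha i + beta j).
set Y := expR (gamma + alpha j + beta i).
set W := expR (2 * gamma + alpha i + beta j + alpha j + beta i + rho).
have -> : expR (2 * gamma + alpha i + beta j + alpha j + beta i + (rho + delta))
    = W * expR delta by rewrite -expRD; congr expR; ring.
have -> : expR rho * (etav gamma alpha beta i * etav gamma alpha beta j) = W.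
  by rewrite /etav /muv -!expRD; congr expR; lra.
have X_gt0 : 0 < X := expR_gt0 _.
have Y_gt0 : 0 < Y := expR_gt0 _.
have W_gt0 : 0 < W := expR_gt0 _.
have m_gt0 : 0 < expR delta := expR_gt0 _.
rewrite sum_cell_sqr_ratio ?mulr_gt0 ?ltr01 //.
have -> : (1 + X + Y + W) *
     (1 ^+ 2 / 1 + X ^+ 2 / X + Y ^+ 2 / Y + (W * expR delta) ^+ 2 / W) /
     (1 + X + Y + W * expR delta) ^+ 2 =
    ((1 + X + Y) + W) * ((1 + X + Y) + expR delta ^+ 2 * W) /
     ((1 + X + Y) + expR delta * W) ^+ 2.
  have : 0 < expR delta * W by apply: mulr_gt0.
  by move=> ?; field; rewrite !lt0r_neq0 //; lra.
by apply: tilt_ratio_le => //; lra.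
Qed.

Lemma dyad_chi2_gamma_shift_le rho gamma delta i j : delta ^+ 2 <= 1 / 4 ->
  \sum_(a : bool) \sum_(b : bool)
     pair_prob (rho + 2 * delta) (gamma - delta) alpha beta i j a b ^+ 2 /
     pair_prob rho gamma alpha beta i j a b
  <= 1 + 16 * delta ^+ 2 * (muv gamma alpha i * muv gamma beta j
                            + muv gamma alpha j * muv gamma beta i).
Proof.
move=> delta_small.
under eq_bigr => a _ do under eq_bigr => b _ do rewrite !pair_prob_cell.
set X := expR (gamma + alpha i + beta j).
set Y := expR (gamma + alpha j + beta i).
set W := expR (2 * gamma + alpha i + beta j + alpha j + beta i + rho).
set m := expR (- delta).
have -> : expR (gamma - delta + alpha i + beta j) = X * m
  by rewrite -expRD; congr expR; ring.
have -> : expR (gamma - delta + alpha j + beta i) = Y * m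
  by rewrite -expRD; congr expR; ring.
have -> : expR (2 * (gamma - delta) + alpha i + beta j + alpha j + beta i
                + (rho + 2 * delta)) = W by congr expR; ring.
have -> : muv gamma alpha i * muv gamma beta j + muv gamma alpha j * muv gamma beta i
    = X + Y by rewrite /muv -!expRD; congr (expR _ + expR _); lra.
have X_gt0 : 0 < X := expR_gt0 _.
have Y_gt0 : 0 < Y := expR_gt0 _.
have W_gt0 : 0 < W := expR_gt0 _.
have m_gt0 : 0 < m := expR_gt0 _.
rewrite sum_cell_sqr_ratio ?mulr_gt0 ?ltr01 //.
have -> : (1 + X + Y + W) *
     (1 ^+ 2 / 1 + (X * m) ^+ 2 / X + (Y * m) ^+ 2 / Y + W ^+ 2 / W) /
     (1 + X * m + Y * m + W) ^+ 2 =
    ((1 + W) + (X + Y)) * ((1 + W) + m ^+ 2 * (X + Y)) / ((1 + W) + m * (X + Y)) ^+ 2.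
  have : 0 < m * (X + Y) by apply: mulr_gt0 => //; lra.
  have : 0 < X * m by apply: mulr_gt0.
  have : 0 < Y * m by apply: mulr_gt0.
  by move=> *; field; rewrite !lt0r_neq0 //; lra.
by rewrite -(sqrrN delta); apply: tilt_ratio_le; rewrite ?sqrrN //; lra.
Qed.

Lemma chi2_rho_shift_le rho gamma delta : delta ^+ 2 <= 1 / 4 ->
  chi2 (p1_prob rho gamma alpha beta) (p1_prob (rho + delta) gamma alpha beta)
  <= expR (16 * (expR rho * l1 (etav gamma alpha beta) ^+ 2 * delta ^+ 2)) - 1.
Proof.
move=> delta_small.
apply: le_trans (chi2_p1_le_expR (fun i j =>
  dyad_chi2_rho_shift_le rho gamma i j delta_small)) _.
rewrite lerD2r ler_expR; under eq_bigr do rewrite -mulr_sumr; rewrite -mulr_sumr.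
rewrite [in leRHS](mulrC _ (delta ^+ 2)) [in leRHS]mulrA.
apply: ler_wpM2l; first by rewrite mulr_ge0 ?sqr_ge0.
rewrite (l1E_ge0 (etav_ge0 gamma)) expr2.
rewrite mulr_suml mulr_sumr; apply: ler_sum => i _.
rewrite mulr_sumr mulr_sumr [leRHS](bigID (fun j : 'I_n => (i < j)%N)) /= lerDl.
by apply: sumr_ge0 => j _; rewrite !mulr_ge0 ?expR_ge0 ?etav_ge0.
Qed.

Lemma chi2_gamma_shift_le rho gamma delta : delta ^+ 2 <= 1 / 4 ->
  chi2 (p1_prob rho gamma alpha beta) (p1_prob (rho + 2 * delta) (gamma - delta) alpha beta)
  <= expR (16 * (l1 (muv gamma alpha) * l1 (muv gamma beta) * delta ^+ 2)) - 1.
Proof.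
move=> delta_small.
apply: le_trans (chi2_p1_le_expR (fun i j =>
  dyad_chi2_gamma_shift_le rho gamma i j delta_small)) _.
rewrite lerD2r ler_expR; under eq_bigr do rewrite -mulr_sumr; rewrite -mulr_sumr.
rewrite [in leRHS](mulrC _ (delta ^+ 2)) [in leRHS]mulrA.
apply: ler_wpM2l; first by rewrite mulr_ge0 ?sqr_ge0.
rewrite l1_muv_mul.
by apply: sum_upper_sym_le => i j; rewrite mulr_ge0 ?muv_ge0.
Qed.

End ParameterShifts.

Lemma eventually_sqr_le_quarter (R : realType) (x d : nat -> R) :
  (\forall n \near \oo, 4 <= x n) -> (fun n => x n * d n ^+ 2) @ \oo --> 0 ->
  \forall n \near \oo, d n ^+ 2 <= 1 / 4.
Proof.
move=> x_ge4 /cvgrPdist_le /(_ 1 ltr01) xd_small.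
apply: filterS2 x_ge4 xd_small => n x_ge; rewrite sub0r normrN => /(le_trans (ler_norm _)).
by have := sqr_ge0 (d n); nra.
Qed.

Lemma cvg0_of_le_expR_sub1 (R : realType) (c : R) (u g : nat -> R) :
  (forall n, 0 <= u n) -> g @ \oo --> 0 ->
  (\forall n \near \oo, u n <= expR (c * g n) - 1) -> u @ \oo --> 0.
Proof.
move=> u_ge0 g_to0 u_le.
have : (expR (c * g n) - 1) @[n --> \oo] --> expR (c * 0) - 1.
  apply: cvgB; last exact: cvg_cst.
  by apply: continuous_cvg; [exact: continuous_expR | exact: cvgM (cvg_cst c) g_to0].
rewrite mulr0 expR0 subrr => bound_to0.
apply: squeeze_cvgr (cvg_cst 0) bound_to0; apply: filterS u_le => n.
by rewrite u_ge0.
Qed.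

Theorem theorem3 (R : realType)
  (rho gamma delta1 delta2 rho1 gamma1 : nat -> R)
  (alpha beta : forall n : nat, 'I_n -> R)
  (Halpha : forall n, \sum_(i < n) alpha n i = 0)
  (Hbeta : forall n, \sum_(i < n) beta n i = 0)
  (* (G1) *)
  (G1mu : (fun n => vmax (muv (gamma n) (alpha n))) @ \oo --> (0 : R))
  (G1nu : (fun n => vmax (muv (gamma n) (beta n))) @ \oo --> (0 : R))
  (G1eta : (fun n => expR (rho n / 2) * vmax (etav (gamma n) (alpha n) (beta n)))
             @ \oo --> (0 : R))
  (* (G2) *)
  (G2a : (fun n => expR (rho n / 2) * l1 (etav (gamma n) (alpha n) (beta n)))
           @ \oo --> +oo)
  (G2b : (fun n => l1 (etav (gamma n) (alpha n) (beta n))) @ \oo --> +oo)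
  (Hcase :
     (* Case (S) *)
     ((fun n => expR (rho n) / expR (rho_tilde (gamma n) (alpha n) (beta n)))
         @ \oo --> (0 : R)
      /\ (forall n, rho1 n = rho n + delta1 n /\ gamma1 n = gamma n)
      /\ (fun n => expR (rho n) * l1 (etav (gamma n) (alpha n) (beta n)) ^+ 2
                   * delta1 n ^+ 2) @ \oo --> (0 : R))
     \/
     (* Case (L) *)
     ((exists2 C : R, 0 < C & \forall n \near \oo,
          C * expR (rho_tilde (gamma n) (alpha n) (beta n)) <= expR (rho n))
      /\ (forall n, rho1 n = rho n + 2 * delta2 n /\ gamma1 n = gamma n - delta2 n)
      /\ (fun n => l1 (muv (gamma n) (alpha n)) * l1 (muv (gamma n) (beta n))
                   * delta2 n ^+ 2) @ \oo --> (0 : R))) :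
  (fun n => chi2 (p1_prob (rho n) (gamma n) (alpha n) (beta n))
                 (p1_prob (rho1 n) (gamma1 n) (alpha n) (beta n)))
    @ \oo --> (0 : R).
Proof.
have chi2_nonneg n : 0 <= chi2 (p1_prob (rho n) (gamma n) (alpha n) (beta n))
                              (p1_prob (rho1 n) (gamma1 n) (alpha n) (beta n)).
  by apply: chi2_ge0 => A; exact: p1_prob_gt0.
case: Hcase => [[_ [shift lim]] | [_ [shift lim]]];
  apply: (cvg0_of_le_expR_sub1 (c := 16) chi2_nonneg lim).
- have delta_small : \forall n \near \oo, delta1 n ^+ 2 <= 1 / 4.
    apply: eventually_sqr_le_quarter lim; move/cvgryPge: G2a => /(_ 2).
    apply: filterS => n big; rewrite (splitr (rho n)) expRD -expr2 -exprMn.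
    by rewrite expr2; apply: le_trans (ler_pM _ _ big big); lra.
  apply: filterS delta_small => n small; have [-> ->] := shift n.
  exact: chi2_rho_shift_le.
- have delta_small : \forall n \near \oo, delta2 n ^+ 2 <= 1 / 4.
    apply: eventually_sqr_le_quarter lim; move/cvgryPge: G2b => /(_ 4).
    by apply: filterS => n /le_trans; apply; apply: l1_etav_le.
  apply: filterS delta_small => n small; have [-> ->] := shift n.
  exact: chi2_gamma_shift_le.
Qed.
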